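(* Let $G$ be an $r$-graph on $n$ vertices and let $\varepsilon>0$. One can delete at most $\varepsilon n^r$ edges from $G$ so that the resulting $r$-graph $G'$ has the following property: for any $\mathbf x,\mathbf y\in\vec E(G')$ that are tightly connected in $G'$, there is a tight walk from $\mathbf x$ to $\mathbf y$ in $G'$ of stretch $sr$ for some integer $s\le(2r+1)\varepsilon^{-r}$.
   Context: An $r$-graph is an $r$-uniform hypergraph. An oriented edge of $G$ is an ordered $r$-tuple $x_1\cdots x_r$ whose underlying set is an edge of $G$; $\vec E(G)$ is the set of oriented edges. $\mathbf x,\mathbf y\in\vec E(G)$ are tightly connected (in $G$) if there is a sequence $\mathbf x=\mathbf z^{(0)},\dots,\mathbf z^{(t)}=\mathbf y$ of oriented edges of $G$ such that consecutive terms differ in at most one coordinate. A tight walk of stretch $\ell$ is a sequence $v_1\cdots v_{\ell+r}$ of (not necessarily distinct) vertices such that $v_{i+1}\cdots v_{i+r}\in\vec E(G)$ for each $0\le i\le\ell$; it is a walk from $v_1\cdots v_r$ to $v_{\ell+1}\cdots v_{\ell+r}$. *)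

From HB Require Import structures.
From mathcomp Require Import all_boot all_order all_algebra.
Set Implicit Arguments. Unset Strict Implicit. Unset Printing Implicit Defensive.

Definition uniform (V : finType) (r : nat) (G : {set {set V}}) : Prop :=
  forall e, e \in G -> #|e| = r.

Definition oriented_edge (V : finType) (r : nat) (G : {set {set V}})
  (s : seq V) : bool := (size s == r) && ([set v in s] \in G).

Definition differ_le1 (V : finType) (r : nat) (x y : r.-tuple V) : bool :=
  #|[set i : 'I_r | tnth x i != tnth y i]| <= 1.

Definition tight_step (V : finType) (r : nat) (G : {set {set V}}) :
  rel (r.-tuple V) :=
  fun x y => [&& oriented_edge r G x, oriented_edge r G y & differ_le1 x y].

Definition tightly_connected (V : finType) (r : nat) (G : {set {set V}})
  (x y : r.-tuple V) : Prop :=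
  [/\ oriented_edge r G x, oriented_edge r G y & connect (tight_step G) x y].

Definition tight_walk (V : finType) (r : nat) (G : {set {set V}}) (l : nat)
  (x y : r.-tuple V) : Prop :=
  exists w : seq V,
    [/\ size w = l + r,
        forall i, i <= l -> oriented_edge r G (take r (drop i w)),
        take r w = val x
      & drop l w = val y].

From HB Require Import structures.
From mathcomp Require Import all_boot all_order all_algebra.
From mathcomp Require Import zify.
Set Implicit Arguments. Unset Strict Implicit. Unset Printing Implicit Defensive.
Import Order.TTheory GRing.Theory Num.Theory.

(* Repeatedly delete all edges through an (r-1)-set of codegree below eps n.
   Each deletion round costs fewer than eps n edges and kills one (r-1)-set,
   so at most eps n^r edges go, and afterwards every (r-1)-subset of an edge
   has codegree at least eps n.  Replacing the coordinates of an oriented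
   edge z one at a time then reaches at least (eps n)^r oriented edges within
   r tight steps of z.  Along a shortest tight path of length s, the oriented
   edges at distances 0, 2r+1, 2(2r+1), ... have pairwise disjoint such
   neighbourhoods, whence (s/(2r+1) + 1) (eps n)^r <= n^r and
   s <= (2r+1) eps^-r; concatenating the tuples along the path gives a tight
   walk of stretch s r. *)

Section ExactWalks.
Variables (T : finType) (e : rel T).

Definition reach k x y := [exists p : k.-tuple T, path e x p && (last x p == y)].

Lemma reachP k x y :
  reflect (exists p, [/\ size p = k, path e x p & last x p = y]) (reach k x y).
Proof.
apply: (iffP existsP) => [[p /andP[xp /eqP <-]] | [p [size_p xp <-]]].
  by exists (val p); rewrite size_tuple.
have size_p' : size p == k by apply/eqP.
by exists (Tuple size_p'); rewrite /= xp eqxx.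
Qed.

Lemma reach0 x y : reach 0 x y = (x == y).
Proof. by apply/reachP/eqP => [[p [/size0nil -> _ <-]] | ->] //; exists [::]. Qed.

Lemma reachSr k x z : reach k.+1 x z = [exists y, reach k x y && e y z].
Proof.
apply/reachP/existsP => [[p [size_p xp <-]] | [y /andP[/reachP[p [size_p xp <-]] yz]]].
  case/lastP: p size_p xp => [//|p y]; rewrite size_rcons rcons_path last_rcons.
  by case=> size_p /andP[xp yz]; exists (last x p); rewrite yz andbT; apply/reachP; exists p.
by exists (rcons p z); rewrite size_rcons rcons_path last_rcons size_p xp yz.
Qed.

Lemma reach_cat a b x y z : reach a x y -> reach b y z -> reach (a + b) x z.
Proof.
move=> /reachP[p [<- xp <-]] /reachP[q [<- yq <-]].
by apply/reachP; exists (p ++ q); rewrite size_cat cat_path last_cat xp yq.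
Qed.

Lemma reach_split t k x y : t <= k -> reach k x y ->
  exists z, reach t x z /\ reach (k - t) z y.
Proof.
move=> le_tk /reachP[p [size_p xp <-]].
move: xp; rewrite -(cat_take_drop t p) cat_path => /andP[xp1 xp2].
exists (last x (take t p)); split; apply/reachP.
  by exists (take t p); rewrite size_takel ?size_p.
by exists (drop t p); rewrite size_drop size_p -last_cat cat_take_drop.
Qed.

Lemma connect_reachP x y : reflect (exists k, reach k x y) (connect e x y).
Proof.
apply: (iffP connectP) => [[p xp ->] | [k /reachP[p [_ xp <-]]]]; last by exists p.
by exists (size p); apply/reachP; exists p.
Qed.

Hypothesis e_sym : symmetric e.

Lemma reach_rev k x y : reach k x y -> reach k y x.
Proof.
move=> /reachP[p [size_p xp <-]]; apply/reachP; exists (rev (belast x p)); split.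
- by rewrite size_rev size_belast.
- by rewrite rev_path (eq_path (fun u v => e_sym v u)).
- by case: p {size_p xp} => [|z p] //=; rewrite rev_cons last_rcons.
Qed.

(* The sets [B z] at the points z at distance 0, d, 2d, ... (d = 2 rho + 1) of a
   shortest walk are pairwise disjoint: a common point would shorten the walk. *)
Lemma shortest_walk_packing (R : numDomainType) (b : R) (rho k : nat)
    (B : T -> {set T}) x y :
  reach k x y -> (forall k', reach k' x y -> k <= k') ->
  (forall t z, reach t x z -> b <= #|B z|%:R)%R ->
  (forall t z w, reach t x z -> w \in B z -> reach rho z w) ->
  ((k %/ (2 * rho + 1)).+1%:R * b <= #|T|%:R)%R.
Proof.
move=> xy k_min B_big B_near; set d := 2 * rho + 1.
have packing m : m <= (k %/ d).+1 -> exists A : {set T},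
    (m%:R * b <= #|A|%:R)%R /\ {in A, forall w, exists2 t, t + rho < m * d & reach t x w}.
  elim: m => [_|m IHm lt_m].
    by exists set0; split=> [|w]; rewrite ?inE ?mul0r ?cards0.
  have [A [A_big A_near]] := IHm (ltnW lt_m).
  have le_md_k : m * d <= k.
    by rewrite (leq_trans _ (leq_divM k d)) // leq_mul2r -ltnS lt_m orbT.
  have [z [xz zy]] := reach_split le_md_k xy.
  have disj : [disjoint A & B z].
    apply/pred0P => w /=; apply/negbTE/andP => -[/A_near[t lt_t xw] /(B_near _ _ _ xz) zw].
    have := k_min _ (reach_cat (reach_cat xw (reach_rev zw)) zy); lia.
  exists (A :|: B z); split.
    move: disj; rewrite -(leq_card_setU A (B z)).2 => /eqP ->.
    by rewrite natrD mulrSr mulrDl mul1r lerD // (B_big _ _ xz).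
  move=> w /setUP[/A_near[t lt_t xw] | zw]; first by exists t; rewrite // mulSn; lia.
  by exists (m * d + rho); [rewrite mulSn; lia | exact: reach_cat xz (B_near _ _ _ xz zw)].
have [A [A_big _]] := packing _ (leqnn _).
by apply: le_trans A_big _; rewrite ler_nat max_card.
Qed.

End ExactWalks.

Section TightWalks.
Variables (V : finType) (r : nat) (G : {set {set V}}).

Lemma tight_step_sym : symmetric (@tight_step V r G).
Proof.
move=> x y; rewrite /tight_step andbCA /differ_le1.
by under [in RHS]eq_finset => i do rewrite eq_sym.
Qed.

Lemma oriented_edge_rot j (s : seq V) :
  oriented_edge r G (rot j s) = oriented_edge r G s.
Proof.
rewrite /oriented_edge size_rot; congr (_ && (_ \in G)).
by apply/setP => v; rewrite !inE mem_rot.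
Qed.

Lemma differ_le1_take_drop (x y : r.-tuple V) j :
  differ_le1 x y -> take j x = take j y \/ drop j x = drop j y.
Proof.
have [r0 _ | r_gt0] := posnP r.
  suff -> : x = y by left.
  by apply: eq_from_tnth => i; have := ltn_ord i; lia.
rewrite /differ_le1; set D := [set o | _] => /card_le1_eqP diff.
pose x0 := tnth x (Ordinal r_gt0).
have differ i : nth x0 x i != nth x0 y i -> exists2 o : 'I_r, o \in D & val o = i.
  have [lt_ir | le_ri] := ltnP i r; last by rewrite !nth_default ?size_tuple ?eqxx.
  by exists (Ordinal lt_ir); rewrite // inE !(tnth_nth x0).
have [/exists_inP[o o_D lt_oj] | /exists_inPn no_diff] := boolP [exists o in D, o < j].
  right; apply: (eq_from_nth (x0 := x0)) => [|i _]; first by rewrite !size_drop !size_tuple.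
  rewrite !nth_drop; apply/eqP; apply: contraT => /differ[o' /(diff _ _ o_D) eq_o o'_val].
  by move: lt_oj; rewrite -eq_o o'_val ltnNge leq_addr.
left; apply: (eq_from_nth (x0 := x0)) => [|i]; first by rewrite !size_take !size_tuple.
rewrite size_take_min leq_min => /andP[lt_ij _].
rewrite !nth_take //; apply/eqP; apply: contraT => /differ[o /no_diff].
by move=> /[swap] ->; rewrite lt_ij.
Qed.

(* Every length-r window of [y ++ y'] is a rotation of [y] or of [y']. *)
Lemma oriented_edge_window (y y' : r.-tuple V) j : tight_step G y y' -> j <= r ->
  oriented_edge r G (take r (drop j (y ++ y'))).
Proof.
move=> /and3P[y_G y'_G /(differ_le1_take_drop j) take_drop_eq] le_jr.
rewrite -[y in y ++ _](cat_take_drop j) -catA drop_size_cat ?size_takel ?size_tuple //.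
rewrite take_cat size_drop size_tuple ltnNge leq_subr /= subKn //.
by case: take_drop_eq => [<- | ->]; rewrite -/(rot j _) oriented_edge_rot.
Qed.

Lemma tight_walk0 (x : r.-tuple V) : oriented_edge r G x -> tight_walk G 0 x x.
Proof.
move=> x_G; exists x; rewrite take_oversize ?size_tuple // drop0; split => // i.
by rewrite leqn0 => /eqP ->; rewrite drop0 take_oversize ?size_tuple.
Qed.

Lemma tight_walk_step l (x y y' : r.-tuple V) :
  tight_walk G l x y -> tight_step G y y' -> tight_walk G (l + r) x y'.
Proof.
move=> [w [size_w w_G w_x w_y]] yy'; exists (w ++ y'); split.
- by rewrite size_cat size_w size_tuple.
- move=> i le_i; have [le_il | lt_li] := leqP i l.
    rewrite -[w](cat_take_drop i) -catA drop_size_cat ?size_takel ?size_w //.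
    by rewrite takel_cat ?size_drop ?size_w; [exact: w_G | lia].
  rewrite -[w](cat_take_drop l) w_y -catA -(subnK (ltnW lt_li)) -drop_drop.
  rewrite drop_size_cat ?size_takel ?size_w ?leq_addr //.
  by apply: oriented_edge_window yy' _; lia.
- by rewrite takel_cat ?size_w ?leq_addl.
- by rewrite drop_size_cat.
Qed.

Lemma reach_oriented_edge k (x y : r.-tuple V) :
  oriented_edge r G x -> reach (tight_step G) k x y -> oriented_edge r G y.
Proof.
case: k => [x_G | k _]; first by rewrite reach0 => /eqP <-.
by rewrite reachSr => /existsP[z /andP[_ /and3P[]]].
Qed.

Lemma tight_walk_of_reach k (x y : r.-tuple V) :
  oriented_edge r G x -> reach (tight_step G) k x y -> tight_walk G (k * r) x y.
Proof.
move=> x_G; elim: k y => [y | k IHk y].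
  by rewrite reach0 => /eqP <-; exact: tight_walk0.
rewrite reachSr mulSnr => /existsP[z /andP[xz zy]].
exact: tight_walk_step (IHk z xz) zy.
Qed.

End TightWalks.

Lemma ffact_leq_expn n m : n ^_ m <= n ^ m.
Proof.
rewrite ffact_prod -[in n ^ m](card_ord m) -prod_nat_const.
by apply: leq_prod => i _; apply: leq_subr.
Qed.

Section CodegreeDeletion.
Variables (R : realDomainType) (V : finType) (r : nat) (th : R).

Definition star (H : {set {set V}}) (S : {set V}) := [set e in H | S \subset e].

Definition shadow (H : {set {set V}}) :=
  [set S : {set V} | (#|S| == r.-1) && [exists e in H, S \subset e]].

Definition min_codeg_ge (H : {set {set V}}) :=
  [forall S in shadow H, th <= #|star H S|%:R]%R.

Lemma card_shadow (H : {set {set V}}) : #|shadow H| <= #|V| ^ r.-1.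
Proof.
apply: leq_trans (_ : #|[set S : {set V} | #|S| == r.-1]| <= _).
  by apply/subset_leq_card/subsetP => S; rewrite !inE => /andP[].
rewrite card_draws (leq_trans _ (ffact_leq_expn _ _)) // -bin_ffact.
by rewrite leq_pmulr ?fact_gt0.
Qed.

Lemma shadow_del_star (H : {set {set V}}) S :
  S \in shadow H -> #|shadow (H :\: star H S)| < #|shadow H|.
Proof.
move=> S_sh; rewrite (cardsD1 S (shadow H)) S_sh add1n ltnS.
apply/subset_leq_card/subsetP => S'; rewrite !inE => /andP[-> /exists_inP[e]].
rewrite !inE => /andP[S_e e_H] S'_e /=.
apply/andP; split; last by apply/exists_inP; exists e.
by apply: contraNneq S_e => eq_S'; rewrite e_H -eq_S'.
Qed.

Lemma exists_min_codeg_subgraph (H : {set {set V}}) : (0 <= th)%R ->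
  exists H' : {set {set V}},
    [/\ H' \subset H, min_codeg_ge H' & #|H :\: H'|%:R <= th * #|shadow H|%:R]%R.
Proof.
move=> th_ge0; have [m] := ubnP #|H|; elim: m => // m IHm in H *; rewrite ltnS => card_H.
have [H_good | /forall_inPn[S S_sh]] := boolP (min_codeg_ge H).
  by exists H; split => //; rewrite setDv cards0 mulr_ge0 ?ler0n.
rewrite /= -ltNge => /ltW star_small; set H1 := H :\: star H S.
have H1_proper : H1 \proper H.
  apply/properP; split; first exact: subsetDl.
  have /setIdP[_ /exists_inP[e e_H S_e]] := S_sh.
  by exists e; rewrite // !inE e_H S_e.
have [H' [H'_sub H'_good H'_del]] := IHm H1 (leq_trans (proper_card H1_proper) card_H).
exists H'; split => //; first exact: subset_trans H'_sub (subsetDl _ _).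
have del_sub : H :\: H' \subset star H S :|: (H1 :\: H').
  by apply/subsetP => e; rewrite !inE => /andP[-> ->]; case: (S \subset e).
apply: le_trans (_ : (#|star H S| + #|H1 :\: H'|)%:R <= _)%R.
  by rewrite ler_nat (leq_trans (subset_leq_card del_sub)) ?leq_card_setU.
rewrite natrD; apply: le_trans (lerD star_small H'_del) _.
by rewrite -[X in (X + _)%R]mulr1 -mulrDr nat1r ler_wpM2l // ler_nat shadow_del_star.
Qed.

End CodegreeDeletion.

Lemma subset_card_succ (T : finType) (A B : {set T}) :
  A \subset B -> #|B| = #|A|.+1 -> exists2 u, u \notin A & B = u |: A.
Proof.
move=> sub_AB card_B; have /cards1P[u BA_u] : #|B :\: A| == 1.
  by rewrite cardsD (setIidPr sub_AB) card_B subSnn.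
have : u \in B :\: A by rewrite BA_u set11.
rewrite inE => /andP[u_A _]; exists u => //.
by rewrite -[LHS](setID B A) (setIidPr sub_AB) BA_u setUC.
Qed.

Section Sweep.
Variables (R : realDomainType) (V : finType) (r : nat) (th : R) (H : {set {set V}}).
Hypotheses (H_unif : uniform r H) (H_codeg : min_codeg_ge r th H) (th_ge0 : (0 <= th)%R).

Definition tset (w : r.-tuple V) k u : r.-tuple V :=
  [tuple if val j == k then u else tnth w j | j < r].

Definition tcopy (z : r.-tuple V) k (w : r.-tuple V) : r.-tuple V :=
  [tuple if val j == k then tnth z j else tnth w j | j < r].

Lemma tset_inj (w : r.-tuple V) (i : 'I_r) : injective (tset w i).
Proof. by move=> u u' /(congr1 (fun t => tnth t i)); rewrite !tnth_mktuple eqxx. Qed.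

Lemma tcopy_tset (z w : r.-tuple V) (i : 'I_r) u :
  tnth w i = tnth z i -> tcopy z i (tset w i u) = w.
Proof.
move=> wz_i; apply: eq_from_tnth => j; rewrite !tnth_mktuple.
by case: eqP => // /val_inj ->.
Qed.

Lemma differ_le1_tcopy (z w : r.-tuple V) k : differ_le1 (tcopy z k w) w.
Proof.
apply/card_le1_eqP => j j'; rewrite !inE !tnth_mktuple.
case: (val j =P k) => [jk | _]; last by rewrite eqxx.
case: (val j' =P k) => [j'k | _]; last by rewrite eqxx.
by move=> _ _; apply: val_inj; rewrite jk j'k.
Qed.

Lemma subset_tset (w : r.-tuple V) (i : 'I_r) u :
  u |: ([set v in w] :\ tnth w i) \subset [set v in tset w i u].
Proof.
apply/subsetP => v; rewrite !inE => /predU1P[-> | /andP[v_i /tnthP[j v_j]]].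
  by apply/tnthP; exists i; rewrite tnth_mktuple eqxx.
apply/tnthP; exists j; rewrite tnth_mktuple v_j ifN //.
by apply: contraNneq v_i => /val_inj j_i; rewrite v_j j_i.
Qed.

(* Every edge through the (r-1)-set [[set v in w] :\ tnth w i] is the vertex set
   of some [tset w i u]. *)
Lemma codeg_le_card_tset (w : r.-tuple V) (i : 'I_r) : oriented_edge r H w ->
  (th <= #|[set u | oriented_edge r H (tset w i u)]|%:R)%R.
Proof.
move=> /andP[_ w_H]; set S := [set v in w] :\ tnth w i.
have r_gt0 : 0 < r := leq_ltn_trans (leq0n i) (ltn_ord i).
have card_S : #|S| = r.-1.
  by have := H_unif w_H; rewrite (cardsD1 (tnth w i)) inE mem_tnth add1n => <-.
have S_sh : S \in shadow r H.
  by rewrite inE card_S eqxx; apply/exists_inP; exists [set v in w]; rewrite ?subsetDl.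
apply: le_trans (forall_inP H_codeg S S_sh) _; rewrite ler_nat.
apply: leq_trans (leq_imset_card (fun u => u |: S) _).
apply/subset_leq_card/subsetP => e; rewrite inE => /andP[e_H S_e].
have [u u_S e_eq] : exists2 u, u \notin S & e = u |: S.
  by apply: (subset_card_succ S_e); rewrite H_unif // card_S (prednK r_gt0).
apply/imsetP; exists u => //; rewrite inE /oriented_edge size_tuple eqxx andTb.
suff <- : e = [set v in tset w i u] by [].
apply/eqP; rewrite e_eq eqEcard subset_tset cardsE (leq_trans (card_size _)) //.
by rewrite size_tuple cardsU1 u_S card_S add1n (prednK r_gt0).
Qed.

(* [sweep z k]: the oriented edges obtained from [z] by replacing its coordinates
   [0], ..., [k-1] one at a time, through oriented edges only. *)
Fixpoint sweep (z : r.-tuple V) k : {set r.-tuple V} :=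
  if k is k'.+1 then
    [set w : r.-tuple V | oriented_edge r H w && (tcopy z k' w \in sweep z k')]
  else [set z].

Lemma mem_sweep (z w : r.-tuple V) k : oriented_edge r H z -> w \in sweep z k ->
  [/\ oriented_edge r H w, forall j : 'I_r, k <= j -> tnth w j = tnth z j
    & reach (tight_step H) k z w].
Proof.
move=> z_H; elim: k w => [w | k IHk w]; first by rewrite inE => /eqP ->; rewrite reach0.
rewrite inE => /andP[w_H /IHk[cw_H cw_z z_cw]]; split => // [j lt_kj | ].
  by rewrite -cw_z ?(ltnW lt_kj) // tnth_mktuple ifN // neq_ltn lt_kj orbT.
rewrite reachSr; apply/existsP; exists (tcopy z k w).
by rewrite z_cw /tight_step cw_H w_H differ_le1_tcopy.
Qed.

Lemma sweep_cardS (z : r.-tuple V) k : oriented_edge r H z -> k < r ->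
  (th * #|sweep z k|%:R <= #|sweep z k.+1|%:R)%R.
Proof.
move=> z_H lt_kr; pose i := Ordinal lt_kr.
rewrite -[#|sweep z k.+1|]sum1_card.
rewrite (partition_big (tcopy z k) (mem (sweep z k))) /=; last first.
  by move=> w; rewrite inE => /andP[].
rewrite mulr_natr -sumr_const natr_sum; apply: ler_sum => w w_sw.
have [w_H w_z _] := mem_sweep z_H w_sw.
apply: le_trans (codeg_le_card_tset i w_H) _; rewrite sum1dep_card ler_nat.
rewrite -(card_imset _ (@tset_inj w i)).
apply/subset_leq_card/subsetP => _ /imsetP[u u_H ->].
rewrite inE in u_H; rewrite !inE -[k]/(val i) tcopy_tset ?w_z //.
by rewrite u_H w_sw eqxx.
Qed.

Lemma sweep_card (z : r.-tuple V) k : oriented_edge r H z -> k <= r ->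
  (th ^+ k <= #|sweep z k|%:R)%R.
Proof.
move=> z_H; elim: k => [_ | k IHk lt_kr]; first by rewrite cards1.
by rewrite exprS (le_trans _ (sweep_cardS z_H lt_kr)) // ler_wpM2l // IHk // ltnW.
Qed.

End Sweep.

Lemma tightly_connected_short_walk (R : realDomainType) (V : finType) r
    (H : {set {set V}}) (th : R) (x y : r.-tuple V) :
  uniform r H -> min_codeg_ge r th H -> (0 <= th)%R -> tightly_connected H x y ->
  exists2 s, ((s %/ (2 * r + 1)).+1%:R * th ^+ r <= (#|V| ^ r)%:R)%R
    & tight_walk H (s * r) x y.
Proof.
move=> H_unif H_codeg th_ge0 [x_H _ /connect_reachP xy].
have [s xy_s s_min] := ex_minnP xy.
exists s; last exact: tight_walk_of_reach x_H xy_s.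
rewrite -card_tuple; apply: (shortest_walk_packing (B := sweep H ^~ r) _ xy_s s_min).
- exact: tight_step_sym.
- by move=> t z /(reach_oriented_edge x_H) z_H; apply: sweep_card.
- by move=> t z w /(reach_oriented_edge x_H) z_H /(mem_sweep z_H)[].
Qed.

Lemma natr_le_ceil_inv (R : realFieldType) (s d : nat) (c : R) :
  0 < d -> (0 < c)%R -> ((s %/ d).+1%:R * c <= 1)%R -> (s%:R <= d%:R * c^-1)%R.
Proof.
move=> d_gt0 c_gt0 le1; apply: (@le_trans _ _ ((s %/ d).+1 * d)%:R%R).
  by rewrite ler_nat ltnW // ltn_ceil.
by rewrite natrM mulrC ler_wpM2l // -div1r ler_pdivlMr.
Qed.

Local Open Scope ring_scope.

Theorem proposition4p1 (R : realFieldType) (r : nat) (V : finType)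
  (G : {set {set V}}) (eps : R) :
  (0 < r)%N -> uniform r G -> 0 < eps ->
  exists G' : {set {set V}},
    [/\ G' \subset G,
        (#|G :\: G'|%:R <= eps * (#|V|%:R) ^+ r)
      & forall x y : r.-tuple V,
          tightly_connected G' x y ->
          exists s : nat,
            (s%:R <= (2 * r + 1)%:R * eps ^- r) /\ tight_walk G' (s * r) x y].
Proof.
move=> r_gt0 G_unif eps_gt0; set n := #|V|; pose th := eps * n%:R.
have th_ge0 : 0 <= th by rewrite mulr_ge0 ?ler0n ?ltW.
have [G' [G'_sub G'_codeg G'_del]] := exists_min_codeg_subgraph r G th_ge0.
have G'_unif : uniform r G' by move=> e /(subsetP G'_sub); apply: G_unif.
exists G'; split => //.
  apply: le_trans G'_del _; rewrite -mulrA ler_wpM2l ?(ltW eps_gt0) //.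
  rewrite -natrX -natrM ler_nat -[in (n ^ r)%N](prednK r_gt0) expnS.
  by rewrite leq_mul2l card_shadow orbT.
move=> x y /(tightly_connected_short_walk G'_unif G'_codeg th_ge0)[s s_small walk].
exists s; split => //; apply: natr_le_ceil_inv; [by rewrite addn1 | exact: exprn_gt0 |].
have n_gt0 : 0 < n%:R :> R.
  by rewrite ltr0n; apply/card_gt0P; exists (tnth x (Ordinal r_gt0)).
by rewrite -(ler_pM2r (exprn_gt0 r n_gt0)) mul1r -mulrA -exprMn -natrX.
Qed.
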